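(* Let $f$ be the map from countable graphs to structures in the class $\mathfrak C$ described in the context. For all countable graphs $\mathcal G,\mathcal H$: $\mathcal G$ embeds into $\mathcal H$ if and only if $f(\mathcal G)$ is elementarily embeddable into $f(\mathcal H)$.
   Context: Let $\mathcal S=(2^\omega,(F_\nu)_{\nu\in 2^{<\omega}},(R_\nu)_{\nu\in2^{<\omega}})$ where $F_\nu(\sigma)(x)=\sigma(x)+\nu(x)\bmod 2$ (with $\nu(x)=0$ for $x\ge|\nu|$) and $R_\nu(\sigma)$ holds iff $\nu\preceq\sigma$ ($\nu$ is an initial segment of $\sigma$). Let $\hat{\mathcal S}_0$, $\hat{\mathcal S}_1$ be the substructures of $\mathcal S$ generated by the constant sequence $\bar 0$, resp. $\bar 1$. Let $\mathcal S_0,\mathcal S_1$ be the relational versions of $\hat{\mathcal S}_0,\hat{\mathcal S}_1$, obtained by replacing each $F_\nu$ by its graph $graph_{F_\nu}$ (a binary relation), copied onto universe $\omega$. The class $\mathfrak C$ consists of structures with universe $\omega$ in the language with a unary relation $W$, binary relations $R_\nu$ and $graph_{F_\nu}$ ($\nu\in2^{<\omega}$), a binary relation $N$ and a ternary relation $O$. Fix a partition of $\omega$ into infinite coinfinite sets $(A_i)_{i\in\omega}$, write $A_0=\{a_0,a_1,\dots\}$, and let $\langle\cdot,\cdot\rangle$ be a pairing function. Given a graph $\mathcal G$ on $\omega$ with edge relation $E$, $f(\mathcal G)$ is defined by: $W(a_i)$ for all $a_i\in A_0$; for all $m,n$, the relations $R_\nu$, $graph_{F_\nu}$ restricted to $A_{\langle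 m,n\rangle+1}$ form a copy of $\mathcal S_0$ if $mEn$ and a copy of $\mathcal S_1$ if not $mEn$; $O(a_m,a_n,j)$ for all $j\in A_{\langle m,n\rangle+1}$; and for every $i$, $N(a_i,x)$ holds exactly for $x\in\bigcup_{j}A_{\langle i,j\rangle+1}$. No other instances of relations hold. An embedding of graphs is an injective map preserving edges and non-edges. *)

From mathcomp Require Import all_boot.
Set Implicit Arguments. Unset Strict Implicit. Unset Printing Implicit Defensive.

Definition cantor := nat -> bool.

(* nu in 2^{<omega} is a finite binary string [seq bool];
   nu(x) = 0 (false) for x >= |nu|. *)
Definition F (nu : seq bool) (s : cantor) : cantor :=
  fun x => addb (s x) (nth false nu x).

Definition prefix (nu : seq bool) (s : cantor) : Prop :=
  forall i, i < size nu -> nth false nu i = s i.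

Inductive generated (s0 : cantor) : cantor -> Prop :=
| gen_base : forall t, t =1 s0 -> generated s0 t
| gen_step : forall nu t t', generated s0 t -> t' =1 F nu t -> generated s0 t'.

Definition zero_seq : cantor := fun _ => false.
Definition one_seq : cantor := fun _ => true.

Inductive sym : Type :=
| sW
| sR (nu : seq bool)
| sGF (nu : seq bool)
| sN
| sO.

Definition structure := sym -> seq nat -> Prop.

Inductive formula : Type :=
| fRel (s : sym) (vs : seq nat)
| fEq (i j : nat)
| fNeg (phi : formula)
| fAnd (phi psi : formula)
| fEx (i : nat) (phi : formula).

Definition update (a : nat -> nat) (i x : nat) : nat -> nat :=
  fun j => if j == i then x else a j.

Fixpoint sat (M : structure) (a : nat -> nat) (phi : formula) : Prop :=
  match phi with
  | fRel s vs => M s (map a vs)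
  | fEq i j => a i = a j
  | fNeg phi => ~ sat M a phi
  | fAnd phi psi => sat M a phi /\ sat M a psi
  | fEx i phi => exists x, sat M (update a i x) phi
  end.

Definition elementary_embedding (M N : structure) (h : nat -> nat) : Prop :=
  forall (phi : formula) (a : nat -> nat), sat M a phi <-> sat N (h \o a) phi.

Definition elem_embeddable (M N : structure) : Prop :=
  exists h, elementary_embedding M N h.

Definition is_graph (E : nat -> nat -> Prop) : Prop :=
  (forall m n, E m n -> E n m) /\ (forall m, ~ E m m).

Definition graph_embeds (E E' : nat -> nat -> Prop) : Prop :=
  exists g : nat -> nat,
    (forall m n, g m = g n -> m = n) /\ (forall m n, E m n <-> E' (g m) (g n)).

Definition is_partition (A : nat -> nat -> Prop) : Prop :=
  (forall x, exists i, A i x) /\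
  (forall i j x, A i x -> A j x -> i = j) /\
  (forall i n, exists x, n <= x /\ A i x) /\
  (forall i n, exists x, n <= x /\ ~ A i x).

Definition enumerates (a : nat -> nat) (B : nat -> Prop) : Prop :=
  (forall i, B (a i)) /\ (forall i j, a i = a j -> i = j) /\
  (forall x, B x -> exists i, a i = x).

Definition pairing (p : nat -> nat -> nat) : Prop :=
  (forall m n m' n', p m n = p m' n' -> m = m' /\ n = n') /\
  (forall k, exists m n, p m n = k).

(* The relations R_nu, graph_{F_nu} of M restricted to the set B form a copy
   of the relational version of the substructure of S generated by s0. *)
Definition is_copy (B : nat -> Prop) (s0 : cantor) (M : structure) : Prop :=
  exists pi : nat -> cantor,
    (forall x, B x -> generated s0 (pi x)) /\
    (forall x y, B x -> B y -> pi x =1 pi y -> x = y) /\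
    (forall t, generated s0 t -> exists x, B x /\ pi x =1 t) /\
    (forall nu x, B x -> (M (sR nu) [:: x] <-> prefix nu (pi x))) /\
    (forall nu x y, B x -> B y -> (M (sGF nu) [:: x; y] <-> pi y =1 F nu (pi x))).

Definition is_f (A : nat -> nat -> Prop) (a : nat -> nat) (p : nat -> nat -> nat)
    (E : nat -> nat -> Prop) (M : structure) : Prop :=
  (forall l, M sW l <-> exists x, l = [:: x] /\ A 0 x) /\
  (forall l, M sN l <-> exists i j y, l = [:: a i; y] /\ A (p i j).+1 y) /\
  (forall l, M sO l <-> exists m n z, l = [:: a m; a n; z] /\ A (p m n).+1 z) /\
  (forall m n, E m n -> is_copy (A (p m n).+1) zero_seq M) /\
  (forall m n, ~ E m n -> is_copy (A (p m n).+1) one_seq M) /\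
  (forall nu l, M (sR nu) l -> exists x k, l = [:: x] /\ A k.+1 x) /\
  (forall nu l, M (sGF nu) l -> exists x y k, l = [:: x; y] /\ A k.+1 x /\ A k.+1 y).

From Pilot Require Import Defs.
From mathcomp Require Import all_boot.
From Stdlib Require Import ClassicalEpsilon FunctionalExtensionality.
Set Implicit Arguments. Unset Strict Implicit. Unset Printing Implicit Defensive.

(* Up to isomorphism, the points of the block (m,n) of f(G) are the sequences
   that are eventually 0 if m E n and eventually 1 otherwise.
   A graph embedding g induces (i |-> g i, (m,n,s) |-> (g m,g n,s)). This map is
   elementary: a formula only sees prefixes of some bounded length r, and
   transposing two vertex labels while flipping every bit beyond r in the blocks
   whose edge status changes preserves such a formula, so an existential witness
   can be moved into the image while the parameters stay fixed.
   Conversely, an elementary embedding sends each a_i to some a_{g i} (by W), the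
   block (m,n) into the block (g m,g n) (by O) and preserves every prefix (by R),
   so the generators of the two blocks are eventually equal: m E n iff
   g m E g n. *)

Lemma generated_eventually s0 t :
  generated s0 t <-> exists N, forall k, N <= k -> t k = s0 k.
Proof.
split.
  elim=> [t1 Et|nu t1 t2 _ [N HN] Et]; first by exists 0 => k _; rewrite Et.
  exists (maxn N (size nu)) => k; rewrite geq_max => /andP[hN hnu].
  by rewrite Et /F HN // nth_default // addbF.
case=> N HN; apply: (@gen_step s0 (mkseq (fun k => t k (+) s0 k) N) s0).
  exact: gen_base.
move=> k; rewrite /F; case: (ltnP k N) => hk.
  by rewrite nth_mkseq // addbC addbK.
by rewrite nth_default ?size_mkseq // addbF HN.
Qed.

Lemma const_not_generated (c : bool) : ~ generated (fun _ => c) (fun _ => ~~ c).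
Proof. by case/generated_eventually=> N /(_ N (leqnn N)); case: c. Qed.

(* The canonical copy of f(G): [Vertex i] stands for a_i and [Block m n s] for the
   point of A_<m,n>+1 whose value in the copy of S_0 or S_1 is s. *)
Inductive elt := Vertex of nat | Block of nat & nat & cantor.

Definition labels (x : elt) : seq nat :=
  match x with Vertex i => [:: i] | Block m n _ => [:: m; n] end.

Definition canon_rel (s : sym) (l : seq elt) : Prop :=
  match s, l with
  | sW, [:: Vertex _] => True
  | sN, [:: Vertex i; Block m _ _] => i = m
  | sO, [:: Vertex i; Vertex j; Block m n _] => i = m /\ j = n
  | sR nu, [:: Block _ _ sg] => Defs.prefix nu sg
  | sGF nu, [:: Block m n sg; Block m' n' tg] => [/\ m = m', n = n' & tg = F nu sg]
  | _, _ => False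
  end.

Definition block_gen (b : nat -> nat -> bool) (m n : nat) : cantor :=
  if b m n then zero_seq else one_seq.

Definition canon_dom (b : nat -> nat -> bool) (x : elt) : Prop :=
  if x is Block m n sg then generated (block_gen b m n) sg else True.

Definition eupdate (e : nat -> elt) (i : nat) (x : elt) : nat -> elt :=
  fun j => if j == i then x else e j.

Lemma comp_eupdate (f : elt -> elt) e i x :
  f \o eupdate e i x = eupdate (f \o e) i (f x).
Proof. by apply: functional_extensionality => j; rewrite /eupdate /=; case: eqP. Qed.

Fixpoint csat (D : elt -> Prop) (e : nat -> elt) (phi : formula) : Prop :=
  match phi with
  | fRel s vs => canon_rel s (map e vs)
  | fEq i j => e i = e j
  | fNeg phi => ~ csat D e phi
  | fAnd phi psi => csat D e phi /\ csat D e psi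
  | fEx i phi => exists2 x, D x & csat D (eupdate e i x) phi
  end.

Fixpoint formula_vars (phi : formula) : seq nat :=
  match phi with
  | fRel _ vs => vs
  | fEq i j => [:: i; j]
  | fNeg phi => formula_vars phi
  | fAnd phi psi => formula_vars phi ++ formula_vars psi
  | fEx i phi => i :: formula_vars phi
  end.

Definition sym_rank (s : sym) : nat := if s is sR nu then size nu else 0.

Fixpoint formula_rank (phi : formula) : nat :=
  match phi with
  | fRel s _ => sym_rank s
  | fEq _ _ => 0
  | fNeg phi | fEx _ phi => formula_rank phi
  | fAnd phi psi => maxn (formula_rank phi) (formula_rank psi)
  end.

Lemma csat_ext D phi e1 e2 :
  {in formula_vars phi, e1 =1 e2} -> csat D e1 phi <-> csat D e2 phi.
Proof.
elim: phi e1 e2 => [s vs|i j|phi IH|phi IH psi IH'|i phi IH] e1 e2 /= E12.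
- by have /eq_in_map -> := E12.
- by rewrite !E12 ?inE ?eqxx ?orbT.
- by rewrite (IH e1 e2 E12).
- by rewrite (IH e1 e2) ?(IH' e1 e2) // => v hv; apply: E12; rewrite mem_cat hv ?orbT.
- have Ex x : csat D (eupdate e1 i x) phi <-> csat D (eupdate e2 i x) phi.
    apply: IH => v hv; rewrite /eupdate; case: eqP => // _.
    by apply: E12; rewrite inE hv orbT.
  by split=> -[x Dx /Ex hx]; exists x.
Qed.

Lemma csat_involution D (Phi : elt -> elt) n :
  involutive Phi -> (forall x, D x -> D (Phi x)) ->
  (forall s l, sym_rank s <= n -> canon_rel s l -> canon_rel s (map Phi l)) ->
  forall phi e, formula_rank phi <= n -> csat D e phi <-> csat D (Phi \o e) phi.
Proof.
move=> PhiK DPhi relPhi; elim=> [s vs|i j|phi IH|phi IH psi IH'|i phi IH] e /=.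
- move=> hs; rewrite map_comp; split; first exact: relPhi.
  by move/(relPhi _ _ hs); rewrite -map_comp (eq_map PhiK) map_id.
- by split=> [->//|/(can_inj PhiK)].
- by move=> /IH ->.
- by rewrite geq_max => /andP[/IH -> /IH' ->].
- move=> /IH hphi; split=> -[x Dx hx].
    by exists (Phi x); [exact: DPhi|rewrite -comp_eupdate -hphi].
  exists (Phi x); first exact: DPhi.
  by rewrite hphi comp_eupdate PhiK.
Qed.

(* Flipping the tail beyond [n] exactly when [t] changes the edge status keeps the
   block generator right and leaves all prefixes of length at most [n] intact. *)
Definition relabel (b : nat -> nat -> bool) (t : nat -> nat) (n : nat) (x : elt) : elt :=
  match x with
  | Vertex i => Vertex (t i)
  | Block m m' sg =>
      Block (t m) (t m') (fun k => sg k (+) ((b m m' != b (t m) (t m')) && (n <= k)))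
  end.

Section Relabel.
Variables (b : nat -> nat -> bool) (t : nat -> nat) (n : nat).
Hypothesis tK : involutive t.

Lemma relabel_involutive : involutive (relabel b t n).
Proof.
case=> [i|m m' sg] /=; rewrite !tK //; congr Block.
by apply: functional_extensionality => k; rewrite [b (t m) (t m') == _]eq_sym addbK.
Qed.

Lemma relabel_dom x : canon_dom b x -> canon_dom b (relabel b t n x).
Proof.
case: x => [i|m m' sg] //= /generated_eventually[N HN].
apply/generated_eventually; exists (maxn N n) => k; rewrite geq_max => /andP[hN hn].
by rewrite HN // hn andbT /block_gen; case: (b m m'); case: (b (t m) (t m')).
Qed.

Lemma relabel_rel s l :
  sym_rank s <= n -> canon_rel s l -> canon_rel s (map (relabel b t n) l).
Proof.
case: s => [|nu|nu||] /= hs;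
  do ![case: l => [|[?|???] l] //=]; try by case: l.
- move=> hpre k hk.
  by rewrite hpre // leqNgt (leq_trans hk hs) andbF addbF.
- case=> -> -> ->; split=> //.
  by apply: functional_extensionality => k; rewrite /F addbAC.
- by move=> ->.
- by case=> -> ->.
Qed.

Lemma relabel_id x : {in labels x, t =1 id} -> relabel b t n x = x.
Proof.
case: x => [i|m m' sg] /= tx; first by rewrite tx ?inE.
rewrite !tx ?inE ?eqxx ?orbT //; congr Block.
by apply: functional_extensionality => k; rewrite addbF.
Qed.

Lemma csat_relabel phi e : formula_rank phi <= n ->
  csat (canon_dom b) e phi <-> csat (canon_dom b) (relabel b t n \o e) phi.
Proof.
apply: csat_involution; [exact: relabel_involutive|exact: relabel_dom|exact: relabel_rel].
Qed.
End Relabel.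

Definition transp (u w x : nat) : nat := if x == u then w else if x == w then u else x.

Lemma transp_involutive u w : involutive (transp u w).
Proof.
move=> x; rewrite /transp; case: (eqVneq x u) => [->|xu].
  by rewrite eqxx; case: eqVneq.
case: (eqVneq x w) => [->|xw]; first by rewrite eqxx.
by rewrite (negbTE xu) (negbTE xw).
Qed.

Lemma exists_fresh_image (g : nat -> nat) (I : seq nat) :
  injective g -> exists k, g k \notin I.
Proof.
move=> g_inj; set ks := iota 0 (size I).+1.
have [/hasP[k _ gk]|/hasPn gI] := boolP (has (fun k => g k \notin I) ks).
  by exists k.
have : size (map g ks) <= size I.
  apply: uniq_leq_size => [|_ /mapP[k /gI /negbNE gk ->]] //.
  by rewrite map_inj_uniq ?iota_uniq.
by rewrite size_map size_iota ltnn.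
Qed.

Lemma exists_transp_into_image (g : nat -> nat) (I : seq nat) j :
  injective g -> (forall i, i \in I -> exists k, g k = i) ->
  exists u w, {in I, transp u w =1 id} /\ exists k, g k = transp u w j.
Proof.
move=> g_inj gI; have [[k gk]|j_out] := classic (exists k, g k = j).
  exists j, j; split=> [x _|]; first by rewrite /transp; case: eqP.
  by exists k; rewrite /transp eqxx.
have [k gk] := exists_fresh_image I g_inj.
exists j, (g k); split; last by exists k; rewrite /transp eqxx.
move=> x xI; rewrite /transp; case: eqP => [xj|_].
  by case: j_out; rewrite -xj; exact: gI.
by case: eqP => // xgk; rewrite -xgk xI in gk.
Qed.

Section Lift.
Variables (g : nat -> nat) (bG bH : nat -> nat -> bool).
Hypotheses (g_inj : injective g) (bGH : forall m n, bG m n = bH (g m) (g n)).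

Definition lift (x : elt) : elt :=
  match x with Vertex i => Vertex (g i) | Block m n sg => Block (g m) (g n) sg end.

Lemma lift_inj : injective lift.
Proof. by case=> [i|m n sg] [i'|m' n' sg'] //= [] => [/g_inj-> | /g_inj-> /g_inj-> ->]. Qed.

Lemma canon_dom_lift x : canon_dom bH (lift x) = canon_dom bG x.
Proof. by case: x => //= m n sg; rewrite /block_gen bGH. Qed.

Lemma canon_rel_lift s l : canon_rel s (map lift l) <-> canon_rel s l.
Proof.
have gE m n : g m = g n <-> m = n by split=> [/g_inj|->].
case: s => [|nu|nu||]; do ![case: l => [|[?|???] l] //=]; try by case: l.
- by split=> -[] => [/g_inj-> /g_inj-> ->|-> -> ->].
- by rewrite !gE.
Qed.

Lemma relocate_into_image (I : seq nat) n y :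
  (forall i, i \in I -> exists k, g k = i) -> canon_dom bH y ->
  exists2 Phi : elt -> elt,
    (forall phi e, formula_rank phi <= n ->
       csat (canon_dom bH) e phi <-> csat (canon_dom bH) (Phi \o e) phi) /\
    (forall z, {subset labels z <= I} -> Phi z = z)
  & exists2 x, canon_dom bG x & Phi y = lift x.
Proof.
move=> gI Dy.
have [u1 [w1 [t1I [k1 gk1]]]] := exists_transp_into_image (head 0 (labels y)) g_inj gI.
have gI1 i : i \in g k1 :: I -> exists k, g k = i.
  by rewrite inE => /orP[/eqP->|/gI //]; exists k1.
have [u2 [w2 [t2I [k2 gk2]]]] :=
  exists_transp_into_image (transp u1 w1 (last 0 (labels y))) g_inj gI1.
(* one transposition for each label of [y] *)
pose Phi := relabel bH (transp u2 w2) n \o relabel bH (transp u1 w1) n.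
have DPhi : canon_dom bH (Phi y) by apply/relabel_dom/relabel_dom.
exists Phi; first split.
- move=> phi e rank_phi.
  rewrite (csat_relabel bH (transp_involutive u1 w1) e rank_phi).
  exact: (csat_relabel bH (transp_involutive u2 w2) _ rank_phi).
- move=> z zI; rewrite /Phi /= [relabel _ (transp u1 w1) _ z]relabel_id => [|i /zI].
    by apply: relabel_id => i /zI iI; apply: t2I; rewrite inE iI orbT.
  exact: t1I.
suff [x Ex] : exists x, Phi y = lift x by exists x; rewrite // -canon_dom_lift -Ex.
case: y {Dy DPhi} gk1 gk2 => [i|m m' sg] /= gk1 gk2.
  by exists (Vertex k2); rewrite /= gk2.
have t2m : transp u2 w2 (transp u1 w1 m) = g k1 by rewrite -gk1 t2I // inE gk1 eqxx.
by rewrite /Phi /= t2m -gk2; eexists (Block k1 k2 _).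
Qed.

Lemma csat_lift phi e : (forall v, canon_dom bG (e v)) ->
  csat (canon_dom bG) e phi <-> csat (canon_dom bH) (lift \o e) phi.
Proof.
elim: phi e => [s vs|i j|phi IH|phi IH psi IH'|i phi IH] e De /=.
- by rewrite map_comp canon_rel_lift.
- by split=> [->|/lift_inj].
- by rewrite IH.
- by rewrite IH // IH'.
have De' x : canon_dom bG x -> forall v, canon_dom bG (eupdate e i x v).
  by move=> Dx v; rewrite /eupdate; case: eqP.
split=> -[y Dy hy].
  exists (lift y); first by rewrite canon_dom_lift.
  by rewrite -comp_eupdate -IH //; exact: De'.
pose I := flatten [seq labels (lift (e v)) | v <- formula_vars phi].
have gI l : l \in I -> exists k, g k = l.
  case/flattenP=> _ /mapP[v _ ->]; case: (e v) => [k|m n sg] /=.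
    by rewrite inE => /eqP->; exists k.
  by rewrite !inE => /orP[]/eqP->; eexists.
have [Phi [PhiP PhiI] [x Dx Ex]] := relocate_into_image (formula_rank phi) gI Dy.
exists x => //; rewrite IH; last exact: De'.
have agree : {in formula_vars phi,
    Phi \o eupdate (lift \o e) i y =1 eupdate (lift \o e) i (Phi y)}.
  move=> v v_phi; rewrite /eupdate /=; case: eqP => // _.
  apply: PhiI => k k_v; apply/flattenP; exists (labels (lift (e v))) => //.
  exact: map_f.
by rewrite comp_eupdate -Ex -(csat_ext _ agree) -PhiP.
Qed.
End Lift.

Record canon_iso (M : structure) (D : elt -> Prop) (d : nat -> elt) : Prop := {
  canon_iso_dom : forall x, D (d x);
  canon_iso_inj : injective d;
  canon_iso_onto : forall y, D y -> exists x, d x = y;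
  canon_iso_rel : forall s l, M s l <-> canon_rel s (map d l) }.

Lemma sat_canon_iso M D d phi a : canon_iso M D d ->
  sat M a phi <-> csat D (d \o a) phi.
Proof.
case=> d_dom d_inj d_onto d_rel.
elim: phi a => [s vs|i j|phi IH|phi IH psi IH'|i phi IH] a /=.
- by rewrite d_rel map_comp.
- by split=> [->|/d_inj].
- by rewrite IH.
- by rewrite IH IH'.
have upd x : d \o update a i x = eupdate (d \o a) i (d x).
  by apply: functional_extensionality => v; rewrite /update /eupdate /=; case: eqP.
split=> [[x]|[y /d_onto[x <-]]].
  by rewrite IH upd => hx; exists (d x).
by rewrite -upd -IH => hx; exists x.
Qed.

Lemma canon_iso_elem_embeddable MG MH DG DH dG dH (Phi : elt -> elt) :
  canon_iso MG DG dG -> canon_iso MH DH dH -> (forall x, DG x -> DH (Phi x)) ->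
  (forall phi e, (forall v, DG (e v)) -> csat DG e phi <-> csat DH (Phi \o e) phi) ->
  elem_embeddable MG MH.
Proof.
move=> isoG isoH DPhi csatPhi.
have [h hE] : exists h, forall x, dH (h x) = Phi (dG x).
  apply: (choice (fun x y => dH y = Phi (dG x))) => x.
  exact/(canon_iso_onto isoH)/DPhi/(canon_iso_dom isoG).
exists h => phi a; rewrite (sat_canon_iso _ _ isoG) (sat_canon_iso _ _ isoH).
have -> : dH \o (h \o a) = Phi \o (dG \o a).
  by apply: functional_extensionality => v; exact: hE.
by apply: csatPhi => v; apply: (canon_iso_dom isoG).
Qed.

Definition edgeb (E : nat -> nat -> Prop) (m n : nat) : bool :=
  if excluded_middle_informative (E m n) then true else false.

Lemma edgebP E m n : reflect (E m n) (edgeb E m n).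
Proof. by rewrite /edgeb; case: excluded_middle_informative => h; constructor. Qed.

Section Decoding.
Variables (A : nat -> nat -> Prop) (a : nat -> nat) (p : nat -> nat -> nat).
Variables (E : nat -> nat -> Prop) (M : structure).
Hypotheses (hA : is_partition A) (ha : enumerates a (A 0)) (hp : pairing p).
Hypothesis hM : is_f A a p E M.

Lemma vertex_or_block x : (exists j, a j = x) \/ (exists m n, A (p m n).+1 x).
Proof.
have [i Ai] := hA.1 x; case: i Ai => [|k] Ak; first by left; apply: ha.2.2.
by have [m [n pk]] := hp.2 k; right; exists m, n; rewrite pk.
Qed.

Lemma vertex_not_block j m n : ~ A (p m n).+1 (a j).
Proof. by move/(hA.2.1 _ _ _ (ha.1 j)). Qed.

Lemma block_index_unique m n m' n' x :
  A (p m n).+1 x -> A (p m' n').+1 x -> m = m' /\ n = n'.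
Proof. by move=> Ax /(hA.2.1 _ _ _ Ax) [/hp.1]. Qed.

Lemma block_copy m n : is_copy (A (p m n).+1) (block_gen (edgeb E) m n) M.
Proof.
rewrite /block_gen; case: edgebP => hE; [exact: hM.2.2.2.1|exact: hM.2.2.2.2.1].
Qed.

Definition copy_map m n : nat -> cantor :=
  proj1_sig (constructive_indefinite_description _ (block_copy m n)).

Let copy_map_spec m n := proj2_sig (constructive_indefinite_description _ (block_copy m n)).

Lemma copy_map_gen m n x :
  A (p m n).+1 x -> generated (block_gen (edgeb E) m n) (copy_map m n x).
Proof. by case: (copy_map_spec m n) => + _; apply. Qed.

Lemma copy_map_inj m n x y : A (p m n).+1 x -> A (p m n).+1 y ->
  copy_map m n x = copy_map m n y -> x = y.
Proof.
rewrite /copy_map; case: (copy_map_spec m n) => _ [inj _] Ax Ay pxy.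
by apply: inj => // k; rewrite pxy.
Qed.

Lemma copy_map_onto m n t : generated (block_gen (edgeb E) m n) t ->
  exists2 x, A (p m n).+1 x & copy_map m n x = t.
Proof.
move=> gen_t; case: (copy_map_spec m n) => _ [_ [onto _]].
by have [x [Ax px]] := onto t gen_t; exists x => //; apply: functional_extensionality.
Qed.

Lemma copy_map_prefix m n nu x :
  A (p m n).+1 x -> M (sR nu) [:: x] <-> Defs.prefix nu (copy_map m n x).
Proof. by case: (copy_map_spec m n) => _ [_ [_ [+ _]]]; apply. Qed.

Lemma copy_map_graph m n nu x y : A (p m n).+1 x -> A (p m n).+1 y ->
  M (sGF nu) [:: x; y] <-> copy_map m n y = F nu (copy_map m n x).
Proof.
rewrite /copy_map; case: (copy_map_spec m n) => _ [_ [_ [_ graph]]] Ax Ay.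
by rewrite graph //; split=> [/functional_extensionality|->].
Qed.

Variant decode_spec x : elt -> Prop :=
  | DecodeVertex j of a j = x : decode_spec x (Vertex j)
  | DecodeBlock m n of A (p m n).+1 x : decode_spec x (Block m n (copy_map m n x)).

Lemma decode_exists x : exists y, decode_spec x y.
Proof.
case: (vertex_or_block x) => [[j aj]|[m [n Ax]]]; eexists.
  exact: DecodeVertex aj.
exact: DecodeBlock Ax.
Qed.

Definition decode x : elt :=
  proj1_sig (constructive_indefinite_description _ (decode_exists x)).

Lemma decodeP x : decode_spec x (decode x).
Proof. exact: proj2_sig. Qed.

Lemma decode_vertex j : decode (a j) = Vertex j.
Proof.
by case: decodeP => [j' /ha.2.1 ->|m n /vertex_not_block].
Qed.

Lemma decode_block m n x : A (p m n).+1 x -> decode x = Block m n (copy_map m n x).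
Proof.
move=> Ax; case: decodeP => [j aj|m' n' /(block_index_unique Ax)[<- <-] //].
by move: Ax; rewrite -aj => /vertex_not_block.
Qed.

Lemma decode_rel s l : M s l <-> canon_rel s (map decode l).
Proof.
have [hW [hN [hO [_ [_ [hR hGF]]]]]] := hM.
have block_of k : exists m n, A k.+1 = A (p m n).+1.
  by have [m [n <-]] := hp.2 k; exists m, n.
case: s => [|nu|nu||]; split.
- by case/hW=> _ [-> /ha.2.2[j <-]]; rewrite /= decode_vertex.
- case: l => [|x [|y l]] //=; case: decodeP => // j <- _.
  by apply/hW; exists (a j); split=> //; exact: ha.1.
- move=> MR; have [x [k [El Ax]]] := hR _ _ MR; subst l.
  have [m [n Ak]] := block_of k; rewrite Ak in Ax.
  by rewrite /= (decode_block Ax); exact/copy_map_prefix.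
- case: l => [|x [|y l]] //=; case: decodeP => // m n Ax.
  by rewrite /= (copy_map_prefix _ Ax).
- move=> MGF; have [x [y [k [El [Ax Ay]]]]] := hGF _ _ MGF; subst l.
  have [m [n Ak]] := block_of k; rewrite Ak in Ax Ay.
  by rewrite /= (decode_block Ax) (decode_block Ay); split=> //; exact/copy_map_graph.
- case: l => [|x [|y [|z l]]] //=; case: decodeP => // m n Ax; case: decodeP => // m' n' Ay.
  by case=> em en; subst m' n'; rewrite (copy_map_graph _ Ax Ay).
- by case/hN=> i [j [y [-> Ay]]]; rewrite /= decode_vertex (decode_block Ay).
- case: l => [|x [|y [|z l]]] //=; case: decodeP => // i <-; case: decodeP => // m n Ay ->.
  by apply/hN; exists m, n, y.
- by case/hO=> m [n [z [-> Az]]]; rewrite /= !decode_vertex (decode_block Az).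
- case: l => [|x [|y [|z [|w l]]]] //=; case: decodeP => // i <-; case: decodeP => // j <-;
    case: decodeP => // m n Az [-> ->].
  by apply/hO; exists m, n, z.
Qed.

Lemma f_canon_iso : canon_iso M (canon_dom (edgeb E)) decode.
Proof.
split.
- by move=> x; case: decodeP => //= m n /copy_map_gen.
- move=> x y; case: decodeP => [j <-|m n Ax]; case: decodeP => [j' <-|m' n' Ay] //=.
    by case=> ->.
  by case=> em en; subst m' n'; apply: copy_map_inj.
- case=> [j|m n sg] /=; first by exists (a j); rewrite decode_vertex.
  by case/copy_map_onto=> x Ax px; exists x; rewrite (decode_block Ax) px.
- exact: decode_rel.
Qed.
End Decoding.

Lemma graph_embeds_elem_embeddable A a p EG EH MG MH :
  is_partition A -> enumerates a (A 0) -> pairing p ->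
  is_f A a p EG MG -> is_f A a p EH MH -> graph_embeds EG EH -> elem_embeddable MG MH.
Proof.
move=> hA ha hp hMG hMH [g [g_inj gE]].
have bGH m n : edgeb EG m n = edgeb EH (g m) (g n).
  by apply/edgebP/edgebP; rewrite gE.
have isoG := f_canon_iso hA ha hp hMG; have isoH := f_canon_iso hA ha hp hMH.
apply: (canon_iso_elem_embeddable (Phi := lift g) isoG isoH); last exact: csat_lift.
by move=> x; rewrite (canon_dom_lift bGH).
Qed.

Lemma elementary_embedding_atomic M N h : elementary_embedding M N h ->
  (forall s l, M s l -> N s (map h l)) /\ injective h.
Proof.
move=> hMN; split=> [s l Msl|x y hxy].
  have := (hMN (fRel s (iota 0 (size l))) (nth 0 l)).1.
  by rewrite /= map_comp -/(mkseq _ _) mkseq_nth; apply.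
exact: (hMN (fEq 0 1) (nth 0 [:: x; y])).2.
Qed.

Lemma copy_embedded_generated (B B' : nat -> Prop) s0 s1 M N h :
  (forall s l, M s l -> N s (map h l)) -> (forall x, B x -> B' (h x)) ->
  is_copy B s0 M -> is_copy B' s1 N -> generated s1 s0.
Proof.
move=> hMN hBB' [pi [_ [_ [pi_onto [pi_R _]]]]] [pi' [pi'_gen [_ [_ [pi'_R _]]]]].
have [x [Bx pix]] := pi_onto s0 (gen_base (frefl _)).
have pi'x k : pi' (h x) k = s0 k.
  have pre : Defs.prefix (mkseq s0 k.+1) (pi x).
    by move=> i; rewrite size_mkseq => ik; rewrite nth_mkseq // pix.
  have /(pi'_R _ _ (hBB' _ Bx)) := hMN _ _ ((pi_R _ _ Bx).2 pre).
  by move/(_ k); rewrite size_mkseq nth_mkseq // => ->.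
apply: (@gen_step _ [::] (pi' (h x))); first exact/pi'_gen/hBB'.
by move=> k; rewrite /F nth_nil addbF pi'x.
Qed.

Lemma generated_block_gen b b' m n m' n' :
  generated (block_gen b' m' n') (block_gen b m n) -> b m n = b' m' n'.
Proof.
rewrite /block_gen; case: (b m n); case: (b' m' n') => // gen.
  by case: (@const_not_generated true).
by case: (@const_not_generated false).
Qed.

Lemma elem_embeddable_graph_embeds A a p EG EH MG MH :
  enumerates a (A 0) -> pairing p ->
  is_f A a p EG MG -> is_f A a p EH MH -> elem_embeddable MG MH -> graph_embeds EG EH.
Proof.
move=> ha hp hMG hMH [h /elementary_embedding_atomic[hMN h_inj]].
have [g hg] : exists g, forall i, h (a i) = a (g i).
  apply: (choice (fun i j => h (a i) = a j)) => i.
  have /hMH.1 [_ [[->] /ha.2.2[j <-]]] : MH sW [:: h (a i)].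
    by apply: (hMN _ [:: a i]); apply/hMG.1; exists (a i); split=> //; exact: ha.1.
  by exists j.
have block_to m n x : A (p m n).+1 x -> A (p (g m) (g n)).+1 (h x).
  move=> Ax; have : MH sO [:: h (a m); h (a n); h x].
    by apply: (hMN _ [:: a m; a n; x]); apply/hMG.2.2.1; exists m, n, x.
  by rewrite !hg => /hMH.2.2.1[m' [n' [z [[/ha.2.1<- /ha.2.1<- ->]]]]].
exists g; split=> [i j gij|m n]; first by apply/ha.2.1/h_inj; rewrite !hg gij.
suff bGH : edgeb EG m n = edgeb EH (g m) (g n).
  by split=> /edgebP Emn; apply/edgebP; rewrite ?bGH // -bGH.
apply/generated_block_gen/(copy_embedded_generated hMN (block_to m n)).
  exact: block_copy hMG m n.
exact: block_copy hMH (g m) (g n).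
Qed.

Theorem lemma3p2 (A : nat -> nat -> Prop) (a : nat -> nat) (p : nat -> nat -> nat)
    (hA : is_partition A) (ha : enumerates a (A 0)) (hp : pairing p)
    (EG EH : nat -> nat -> Prop) (hG : is_graph EG) (hH : is_graph EH)
    (MG MH : structure) (hMG : is_f A a p EG MG) (hMH : is_f A a p EH MH) :
  graph_embeds EG EH <-> elem_embeddable MG MH.
Proof.
split; first exact: graph_embeds_elem_embeddable hA ha hp hMG hMH.
exact: elem_embeddable_graph_embeds ha hp hMG hMH.
Qed.
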